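(* Let $X$ and $Y$ be discrete random variables on finite alphabets $\mathcal{X}$ and $\mathcal{Y}$ with joint distribution $P_{XY}$ and marginal $q_Y$. Define, for $\varepsilon\in[\mathsf{P}_{\mathsf{c}}(X),\mathsf{P}_{\mathsf{c}}(X|Y)]$, $$\underline{\mathcal{h}}(\varepsilon)=\sup\{\mathsf{P}_{\mathsf{c}}(Y|Z): P_{Z|Y},\ \mathcal{Z}=\mathcal{Y},\ X - Y - Z,\ \mathsf{P}_{\mathsf{c}}(X|Z)\le\varepsilon\}.$$ If $\mathsf{P}_{\mathsf{c}}(X)<\mathsf{P}_{\mathsf{c}}(X|Y)$, then there exists $\varepsilon_{\mathsf L}\in(\mathsf{P}_{\mathsf{c}}(X),\mathsf{P}_{\mathsf{c}}(X|Y))$ such that $\underline{\mathcal{h}}$ is linear on $[\varepsilon_{\mathsf L},\mathsf{P}_{\mathsf{c}}(X|Y)]$; in particular, for every $\varepsilon\in[\varepsilon_{\mathsf L},\mathsf{P}_{\mathsf{c}}(X|Y)]$, $$\underline{\mathcal{h}}(\varepsilon)=1-(\mathsf{P}_{\mathsf{c}}(X|Y)-\varepsilon)\,\underline{\mathcal{h}}'(\mathsf{P}_{\mathsf{c}}(X|Y)),$$ where $\underline{\mathcal{h}}'(\mathsf{P}_{\mathsf{c}}(X|Y))$ denotes the left derivative of $\underline{\mathcal{h}}$ at $\mathsf{P}_{\mathsf{c}}(X|Y)$. Moreover, if $q_Y(y)>0$ for all $y\in\mathcal{Y}$ and for each $y\in\mathcal{Y}$ there exists a (unique) $x_y\in\mathcal{X}$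 with $P_{X|Y}(x_y|y)>P_{X|Y}(x|y)$ for all $x\ne x_y$, then $$\underline{\mathcal{h}}'(\mathsf{P}_{\mathsf{c}}(X|Y))=\min_{(y,z)\in\mathcal{Y}\times\mathcal{Y}}\frac{q_Y(y)}{P_{XY}(x_y,y)-P_{XY}(x_z,y)},$$ with the convention $\frac{x}{0}=+\infty$ for $x>0$. In addition, if $(y_0,z_0)\in\mathcal{Y}\times\mathcal{Y}$ attains this minimum, then there exists $\varepsilon_{\mathsf L}^{y_0,z_0}<\mathsf{P}_{\mathsf{c}}(X|Y)$ such that the $N$-ary Z-channel $\mathsf{Z}^{y_0,z_0}(\zeta^{y_0,z_0}(\varepsilon))$ achieves $\underline{\mathcal{h}}(\varepsilon)$ for every $\varepsilon\in[\varepsilon_{\mathsf L}^{y_0,z_0},\mathsf{P}_{\mathsf{c}}(X|Y)]$, where $$\zeta^{y_0,z_0}(\varepsilon)=\frac{\mathsf{P}_{\mathsf{c}}(X|Y)-\varepsilon}{P_{XY}(x_{y_0},y_0)-P_{XY}(x_{z_0},y_0)}.$$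
   Context: $\mathsf{P}_{\mathsf{c}}(X)=\max_xP_X(x)$ and $\mathsf{P}_{\mathsf{c}}(X|Z)=\sum_z\max_xP_{XZ}(x,z)$. In the definition of $\underline{\mathcal{h}}$, the channel $P_{Z|Y}$ has output alphabet equal to $\mathcal{Y}$ and $X - Y - Z$ is a Markov chain. For $(y_0,z_0)\in\mathcal{Y}\times\mathcal{Y}$ and $\gamma\in[0,1]$, the $N$-ary Z-channel $\mathsf{Z}^{y_0,z_0}(\gamma)$ (with $N=|\mathcal{Y}|$) is the channel $\mathsf{W}$ with input and output alphabet $\mathcal{Y}$ given by $\mathsf{W}(y|y)=1$ for $y\ne y_0$, $\mathsf{W}(z_0|y_0)=\gamma$, $\mathsf{W}(y_0|y_0)=1-\gamma$. ''Achieves $\underline{\mathcal{h}}(\varepsilon)$'' means it satisfies the constraint $\mathsf{P}_{\mathsf{c}}(X|Z)\le\varepsilon$ and attains $\mathsf{P}_{\mathsf{c}}(Y|Z)=\underline{\mathcal{h}}(\varepsilon)$. *)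

From HB Require Import structures.
From mathcomp Require Import all_boot all_order all_algebra.
From mathcomp Require Import all_classical all_reals.
From mathcomp Require Import topology normedtype.
Set Implicit Arguments. Unset Strict Implicit. Unset Printing Implicit Defensive.
Import Order.TTheory GRing.Theory Num.Theory.
Import numFieldNormedType.Exports.
Local Open Scope classical_set_scope.
Local Open Scope ring_scope.

Section Defs.
Variables (R : realType) (X Y : finType).

Definition is_joint (P : X -> Y -> R) :=
  (forall x y, 0 <= P x y) /\ \sum_(x : X) \sum_(y : Y) P x y = 1.

Definition qY (P : X -> Y -> R) (y : Y) : R := \sum_(x : X) P x y.

Definition condXY (P : X -> Y -> R) (x : X) (y : Y) : R := P x y / qY P y.

Definition PcX (P : X -> Y -> R) : R :=
  \big[Num.max/0]_(x : X) \sum_(y : Y) P x y.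

Definition PcXgY (P : X -> Y -> R) : R :=
  \sum_(y : Y) \big[Num.max/0]_(x : X) P x y.

(* a channel P_{Z|Y} with output alphabet Z = Y; W y z = P_{Z|Y}(z|y) *)
Definition is_channel (W : Y -> Y -> R) :=
  (forall y z, 0 <= W y z) /\ (forall y, \sum_(z : Y) W y z = 1).

(* X - Y - Z Markov chain: P_{XZ}(x,z) = sum_y P_XY(x,y) W(z|y) *)
Definition PcXgZ (P : X -> Y -> R) (W : Y -> Y -> R) : R :=
  \sum_(z : Y) \big[Num.max/0]_(x : X) (\sum_(y : Y) P x y * W y z).

Definition PcYgZ (P : X -> Y -> R) (W : Y -> Y -> R) : R :=
  \sum_(z : Y) \big[Num.max/0]_(y : Y) (qY P y * W y z).

Definition hlow (P : X -> Y -> R) (eps : R) : R :=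
  sup [set PcYgZ P W | W in [set W | is_channel W /\ PcXgZ P W <= eps]].

Definition zchannel (y0 z0 : Y) (g : R) : Y -> Y -> R :=
  fun y z => if y == y0 then
               (if z == z0 then g else if z == y0 then 1 - g else 0)
             else (if z == y then 1 else 0).

Definition achieves (P : X -> Y -> R) (W : Y -> Y -> R) (eps : R) :=
  is_channel W /\ PcXgZ P W <= eps /\ PcYgZ P W = hlow P eps.

Definition pc_ratio (P : X -> Y -> R) (xs : Y -> X) (p : Y * Y) : \bar R :=
  let d := P (xs p.1) p.1 - P (xs p.2) p.1 in
  if d == 0 then +oo%E else (qY P p.1 / d)%:E.

Definition min_pc_ratio (P : X -> Y -> R) (xs : Y -> X) : \bar R :=
  \big[Order.min/+oo%E]_(p : Y * Y) pc_ratio P xs p.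

Definition zeta_yz (P : X -> Y -> R) (xs : Y -> X) (y0 z0 : Y) (eps : R) : R :=
  (PcXgY P - eps) / (P (xs y0) y0 - P (xs z0) y0).

End Defs.

Definition left_dq (R : realType) (f : R -> R) (b : R) : R -> R :=
  fun e => (f b - f e) / (b - e).
Definition left_deriv (R : realType) (f : R -> R) (b : R) : R :=
  lim (left_dq f b @ b^'-).

From HB Require Import structures.
From mathcomp Require Import all_boot all_order all_algebra.
From mathcomp Require Import all_classical all_reals.
From mathcomp Require Import topology normedtype derive.
From mathcomp Require Import ring lra.
Import Order.TTheory GRing.Theory Num.Theory.
Import numFieldNormedType.Exports.
Local Open Scope classical_set_scope.
Local Open Scope ring_scope.

(** For a channel [W], put [d = Pc(X|Y) - Pc(X|Z)] and [u = 1 - Pc(Y|Z)].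
  In an output column [z] the guess of [Y] is some row [ys]; [u] collects the
  [q]-mass sent into [z] by the other rows, and guessing [X] by a maximiser [x]
  of column [ys] loses at most [pc_loss x] of that mass.  Normalising the
  column turns the worst ratio into a linear program over the compact
  polytopes [merge_simplex z]; if [M] is its value, then [M * u >= d] for every
  channel.  Conversely, merging the fraction [t * a y] of each row [y] into
  column [z], for an optimal [a], costs exactly [t] of [Pc(Y|Z)] and, while [t]
  is too small to change any decision for [X], exactly [t * M] of [Pc(X|Z)].
  So [hlow] is affine with slope [1 / M] near [Pc(X|Y)].  When every row has a
  unique argmax, the program is solved at the vertex [e_y0 / q y0] of a pair
  minimising [pc_ratio], and the optimal merge channel is the Z-channel. *)

Set Implicit Arguments. Unset Strict Implicit. Unset Printing Implicit Defensive.

Lemma left_dq_affine (R : realType) (f : R -> R) b c k t0 : 0 < t0 ->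
  (forall e, b - t0 <= e <= b -> f e = c - k * (b - e)) ->
  left_dq f b @ b^'- --> k.
Proof.
move=> t0_gt0 fE; apply: cvg_near_cst; near=> e.
have e_ge : b - t0 <= e by near: e; apply: nbhs_left_ge; rewrite ltrBlDr ltrDl.
have e_lt : e < b by near: e; exact: nbhs_left_lt.
rewrite /left_dq !fE ?e_ge ?lexx ?(ltW e_lt) ?gerBl ?ltW //.
by rewrite subrr mulr0 subr0 opprB addrC subrK mulfK // subr_eq0 gt_eqF.
Unshelve. all: by end_near.
Qed.

Section JointDistribution.
Variables (R : realType) (X Y : finType) (P : X -> Y -> R).
Hypothesis HP : is_joint P.

Definition Pmax (y : Y) : R := \big[Num.max/0]_(x : X) P x y.

Definition pc_loss (x : X) (a : Y -> R) : R := \sum_y (Pmax y - P x y) * a y.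

Lemma joint_ge0 x y : 0 <= P x y.
Proof. by case: HP. Qed.

Lemma qY_ge0 y : 0 <= qY P y.
Proof. by apply: sumr_ge0 => x _; exact: joint_ge0. Qed.

Lemma qY_neq0_gt0 y : qY P y != 0 -> 0 < qY P y.
Proof. by rewrite lt_def qY_ge0 andbT. Qed.

Lemma joint_le_qY x y : P x y <= qY P y.
Proof. by rewrite /qY (bigD1 x) //= lerDl sumr_ge0 // => i _; exact: joint_ge0. Qed.

Lemma sum_qY : \sum_y qY P y = 1.
Proof. by case: HP => _ <-; rewrite /qY exchange_big. Qed.

Lemma exists_qY_gt0 : exists y, 0 < qY P y.
Proof.
have : \sum_y qY P y != 0 by rewrite sum_qY oner_neq0.
by rewrite psumr_neq0 => [/hasP[y _ /andP[_ q_gt0]]|y _]; [exists y|exact: qY_ge0].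
Qed.

Lemma inhabitedX : inhabited X.
Proof.
case: (pickP (@predT X)) => [x _|X0]; first exact: inhabits x.
by case: HP => _; rewrite big_pred0 // => /eqP; rewrite eq_sym oner_eq0.
Qed.

Lemma inhabitedY : inhabited Y.
Proof.
case: (pickP (@predT Y)) => [y _|Y0]; first exact: inhabits y.
case: HP => _; rewrite big1 => [/eqP|x _]; first by rewrite eq_sym oner_eq0.
exact: big_pred0.
Qed.

Lemma joint_le_Pmax x y : P x y <= Pmax y.
Proof. exact: (le_bigmax 0 (P^~ y)). Qed.

Lemma Pmax_ge0 y : 0 <= Pmax y.
Proof.
by case: inhabitedX => x; exact: le_trans (joint_ge0 x y) (joint_le_Pmax x y).
Qed.

Lemma Pmax_le_qY y : Pmax y <= qY P y.
Proof. by apply: bigmax_le => [|x _]; [exact: qY_ge0|exact: joint_le_qY]. Qed.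

Lemma qY_eq0_joint x y : qY P y = 0 -> P x y = 0.
Proof. by move=> q0; apply/eqP; rewrite eq_le joint_ge0 andbT -q0 joint_le_qY. Qed.

Lemma qY_eq0_Pmax y : qY P y = 0 -> Pmax y = 0.
Proof. by move=> q0; apply/eqP; rewrite eq_le Pmax_ge0 andbT -q0 Pmax_le_qY. Qed.

Lemma exists_column_argmax : exists xs : Y -> X, forall y, P (xs y) y = Pmax y.
Proof.
case: inhabitedX => x0; exists (fun y => [arg max_(x > x0) P x y]%O) => y.
by rewrite /Pmax (bigmax_eq_arg 0 x0 predT) // => x _; exact: joint_ge0.
Qed.

Lemma sum_joint_le_PcX x : \sum_y P x y <= PcX P.
Proof. exact: (le_bigmax 0 (fun x => \sum_y P x y)). Qed.

Definition column_gap (z : Y) : R :=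
  \big[Num.min/1]_(x | P x z < Pmax z) (Pmax z - P x z).

Lemma column_gap_gt0 z : 0 < column_gap z.
Proof. by apply: lt_bigmin => // x; rewrite subr_gt0. Qed.

Lemma column_gap_le z x : P x z < Pmax z -> column_gap z <= Pmax z - P x z.
Proof. by move=> lt_x; exact: bigmin_le_cond. Qed.

Lemma sum_mul_indicator (f : Y -> R) z : \sum_y f y * (y == z)%:R = f z.
Proof.
by rewrite (bigD1 z) //= eqxx mulr1 big1 ?addr0 // => y /negbTE ->; rewrite mulr0.
Qed.

Lemma sum_indicator (z : Y) : \sum_y (y == z)%:R = 1 :> R.
Proof. by rewrite (bigD1 z) //= eqxx big1 ?addr0 // => y /negbTE ->. Qed.

Lemma sum_indicator_sym (z : Y) : \sum_y (z == y)%:R = 1 :> R.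
Proof. by under eq_bigr do rewrite eq_sym; exact: sum_indicator. Qed.

Definition merge_channel (z0 : Y) (v : Y -> R) : Y -> Y -> R :=
  fun y z => (y == z)%:R * (1 - v y) + (z == z0)%:R * v y.

Lemma merge_channel_is_channel z0 v :
  (forall y, 0 <= v y <= 1) -> is_channel (merge_channel z0 v).
Proof.
move=> v01; split=> [y z|y].
  by have /andP[? ?] := v01 y; rewrite addr_ge0 ?mulr_ge0 ?subr_ge0.
by rewrite big_split /= -!mulr_suml sum_indicator_sym sum_indicator !mul1r subrK.
Qed.

Lemma sum_merge_channel (f : Y -> R) z0 v z :
  \sum_y f y * merge_channel z0 v y z =
  f z * (1 - v z) + (z == z0)%:R * \sum_y f y * v y.
Proof.
rewrite /merge_channel; under eq_bigr do rewrite mulrDr.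
rewrite big_split /= mulr_sumr; congr (_ + _).
  rewrite -(sum_mul_indicator (fun y => f y * (1 - v y)) z).
  by apply: eq_bigr => y _; rewrite mulrCA mulrC.
by apply: eq_bigr => y _; rewrite mulrCA.
Qed.

Lemma merge_column_le z0 v D z : (forall y, 0 <= v y <= 1) -> v z0 = 0 ->
  (forall x, P x z0 + \sum_y v y * P x y <= Pmax z0 + \sum_y v y * Pmax y - D) ->
  \big[Num.max/0]_x (\sum_y P x y * merge_channel z0 v y z) <=
  (1 - v z) * Pmax z + (z == z0)%:R * (\sum_y v y * Pmax y - D).
Proof.
move=> v01 vz0 hD; have /andP[_ vz1] := v01 z.
have [->|zNz0] := eqVneq z z0; rewrite ?eqxx ?vz0 ?subr0 ?mul1r /=; last first.
  rewrite mulr0n mul0r addr0; apply: bigmax_le => [|x _].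
    by rewrite mulr_ge0 ?subr_ge0 ?Pmax_ge0.
  rewrite sum_merge_channel (negbTE zNz0) mul0r addr0 mulrC.
  by rewrite ler_wpM2l ?subr_ge0 ?joint_le_Pmax.
rewrite addrA; apply: bigmax_le => [|x _].
  case: inhabitedX => x; apply: le_trans (hD x); rewrite addr_ge0 ?joint_ge0 //.
  by apply: sumr_ge0 => y _; have /andP[? _] := v01 y; rewrite mulr_ge0 ?joint_ge0.
rewrite sum_merge_channel eqxx vz0 subr0 !mulr1 mul1r; apply: le_trans (hD x).
by rewrite lerD2l; under eq_bigr do rewrite mulrC.
Qed.

Lemma PcXgZ_merge_le z0 v D : (forall y, 0 <= v y <= 1) -> v z0 = 0 ->
  (forall x, P x z0 + \sum_y v y * P x y <= Pmax z0 + \sum_y v y * Pmax y - D) ->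
  PcXgZ P (merge_channel z0 v) <= PcXgY P - D.
Proof.
move=> v01 vz0 hD.
apply: le_trans (ler_sum _ (fun z _ => merge_column_le z v01 vz0 hD)) _.
rewrite big_split /= -mulr_suml sum_indicator mul1r.
under eq_bigr do rewrite mulrBl mul1r.
by rewrite sumrB addrA subrK.
Qed.

Lemma PcYgZ_merge_ge z0 v : v z0 = 0 ->
  1 - \sum_y qY P y * v y <= PcYgZ P (merge_channel z0 v).
Proof.
move=> vz0; rewrite -sum_qY -sumrB; apply: ler_sum => z _.
apply: le_trans (le_bigmax 0 (fun y => qY P y * merge_channel z0 v y z) z).
rewrite /merge_channel eqxx mul1r.
have [->|zNz0] := eqVneq z z0; first by rewrite vz0 !mulr0 !subr0 addr0 mulr1.
by rewrite mulr0n mul0r addr0 mulrBr mulr1.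
Qed.

Definition hlow_affine_ub (k : R) := forall W, is_channel W ->
  k * (PcXgY P - PcXgZ P W) <= 1 - PcYgZ P W.

Definition hlow_affine_lb (k t0 : R) (W : R -> Y -> Y -> R) :=
  forall d, 0 <= d <= t0 ->
  [/\ is_channel (W d), PcXgZ P (W d) <= PcXgY P - d & 1 - k * d <= PcYgZ P (W d)].

Lemma hlow_affine_ub_by_columns k : 0 <= k ->
  (forall ys (w : Y -> R), (forall y, 0 <= w y) ->
     (forall y, qY P y * w y <= qY P ys * w ys) ->
     exists x, k * pc_loss x w <= \sum_y qY P y * w y - qY P ys * w ys) ->
  hlow_affine_ub k.
Proof.
move=> k0 hcol W [W0 W1].
have rowsE (f : Y -> R) : \sum_y f y = \sum_z \sum_y f y * W y z.
  by rewrite exchange_big; apply: eq_bigr => y _; rewrite -mulr_sumr W1 mulr1.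
have -> : PcXgY P = \sum_z \sum_y Pmax y * W y z := rowsE Pmax.
have -> : 1 = \sum_z \sum_y qY P y * W y z by rewrite -rowsE sum_qY.
rewrite /PcXgZ /PcYgZ -!sumrB mulr_sumr.
apply: ler_sum => z _; case: inhabitedY => y0.
set ys := [arg max_(y > y0) qY P y * W y z]%O.
have ysE : \big[Num.max/0]_y (qY P y * W y z) = qY P ys * W ys z.
  by rewrite (bigmax_eq_arg 0 y0 predT) // => y _; rewrite mulr_ge0 ?qY_ge0.
have ys_max y : qY P y * W y z <= qY P ys * W ys z.
  by rewrite -ysE; exact: (le_bigmax 0 (fun y => qY P y * W y z)).
have [x hx] := hcol ys (W^~ z) (W0^~ z) ys_max.
rewrite ysE; apply: le_trans hx; rewrite ler_wpM2l //.
under [X in _ <= X]eq_bigr do rewrite mulrBl; rewrite sumrB lerB //.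
exact: (le_bigmax 0 (fun x => \sum_y P x y * W y z)).
Qed.

Lemma PcYgZ_le_affine k eps W : 0 <= k -> hlow_affine_ub k ->
  is_channel W -> PcXgZ P W <= eps -> PcYgZ P W <= 1 - k * (PcXgY P - eps).
Proof.
move=> k0 ub Wc WX; rewrite lerBrDl -lerBrDr; apply: le_trans (ub W Wc).
by rewrite ler_wpM2l // lerB.
Qed.

Lemma hlow_affine_lb_at k t0 W eps : hlow_affine_lb k t0 W ->
  PcXgY P - t0 <= eps <= PcXgY P ->
  [/\ is_channel (W (PcXgY P - eps)), PcXgZ P (W (PcXgY P - eps)) <= eps &
      1 - k * (PcXgY P - eps) <= PcYgZ P (W (PcXgY P - eps))].
Proof.
move=> lb /andP[e1 e2].
have [|Wc WX WY] := lb (PcXgY P - eps); first by rewrite subr_ge0 e2 lerBlDr -lerBlDl.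
by rewrite opprB subrKC in WX.
Qed.

Lemma hlow_affine k t0 W eps : 0 <= k -> hlow_affine_ub k -> hlow_affine_lb k t0 W ->
  PcXgY P - t0 <= eps <= PcXgY P -> hlow P eps = 1 - k * (PcXgY P - eps).
Proof.
move=> k0 ub lb /(hlow_affine_lb_at lb)[Wc WX WY].
set S := [set PcYgZ P W' | W' in [set W' | is_channel W' /\ PcXgZ P W' <= eps]].
have S_ub : ubound S (1 - k * (PcXgY P - eps)).
  by move=> _ [W' [W'c W'X] <-]; exact: PcYgZ_le_affine.
have S_W : S (PcYgZ P (W (PcXgY P - eps))) by exists (W (PcXgY P - eps)).
apply/le_anti; rewrite ge_sup //=; last by exists (PcYgZ P (W (PcXgY P - eps))).
apply: le_trans WY _; apply: sup_upper_bound => //.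
by split; [exists (PcYgZ P (W (PcXgY P - eps)))|exists (1 - k * (PcXgY P - eps))].
Qed.

Lemma hlow_left_deriv k t0 W : 0 <= k -> 0 < t0 ->
  hlow_affine_ub k -> hlow_affine_lb k t0 W ->
  cvg (left_dq (hlow P) (PcXgY P) @ (PcXgY P)^'-) /\
  left_deriv (hlow P) (PcXgY P) = k.
Proof.
move=> k0 t0_gt0 ub lb.
have dq_k : left_dq (hlow P) (PcXgY P) @ (PcXgY P)^'- --> k.
  by apply: (left_dq_affine t0_gt0) => e he; rewrite (hlow_affine k0 ub lb he) mulrC.
by split; [apply/cvg_ex; exists k|exact: cvg_lim].
Qed.

Lemma achieves_affine_lb k t0 W eps : 0 <= k -> hlow_affine_ub k ->
  hlow_affine_lb k t0 W -> PcXgY P - t0 <= eps <= PcXgY P ->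
  achieves P (W (PcXgY P - eps)) eps.
Proof.
move=> k0 ub lb e_in; have [Wc WX WY] := hlow_affine_lb_at lb e_in.
split=> //; split=> //; rewrite (hlow_affine k0 ub lb e_in).
by apply/le_anti; rewrite WY PcYgZ_le_affine.
Qed.

End JointDistribution.

Section FunctionSpace.
Import ArrowAsProduct.
Variables (R : realType) (Y : finType).

Lemma continuous_linear_form (c : Y -> R) :
  continuous (fun a : Y -> R => \sum_y c y * a y).
Proof.
apply: continuous_big => [|y _ a]; first exact: add_continuous.
by apply: continuousM; [exact: cst_continuous|exact: proj_continuous].
Qed.

Lemma continuous_bigmin (T : topologicalType) (I : Type) (r : seq I)
    (p : pred I) (F : I -> T -> R) (g : T -> R) :
  continuous g -> (forall i, continuous (F i)) ->
  continuous (fun t => \big[Num.min/g t]_(i <- r | p i) F i t).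
Proof.
move=> g_cont F_cont; elim: r => [|i r IH].
  by rewrite (_ : (fun t => _) = g) //; apply/funext => t; rewrite big_nil.
rewrite (_ : (fun t => _) = fun t => if p i
    then Num.min (F i t) (\big[Num.min/g t]_(j <- r | p j) F j t)
    else \big[Num.min/g t]_(j <- r | p j) F j t); last first.
  by apply/funext => t; rewrite big_cons.
by case: (p i) => // t; exact: continuous_min (F_cont i t) (IH t).
Qed.

Lemma closed_hyperplane (c : Y -> R) (b : R) :
  closed [set a : Y -> R | \sum_y c y * a y = b].
Proof.
rewrite (_ : [set a | _] = (fun a => \sum_y c y * a y) @^-1` [set b]) //.
apply: preimage_closed; last exact: closed_eq.
by move=> a _; exact: continuous_linear_form.
Qed.

Lemma compact_box_hyperplane (B c : Y -> R) (b : R) :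
  compact ([set a : Y -> R | forall y, `[0, B y]%classic (a y)] `&`
           [set a : Y -> R | \sum_y c y * a y = b]).
Proof.
apply: compact_closedI; last exact: closed_hyperplane.
exact: (@tychonoff Y (fun _ => R) (fun y => `[0, B y]%classic)
  (fun y => @segment_compact R 0 (B y))).
Qed.

End FunctionSpace.

Section MergeWeights.
Import ArrowAsProduct.
Variables (R : realType) (X Y : finType) (P : X -> Y -> R) (xs0 : Y -> X).
Hypothesis HP : is_joint P.
Hypothesis xs0_max : forall y, P (xs0 y) y = Pmax P y.

(* [xs0 z] passes the filter, so the default value is one of the terms. *)
Definition min_loss (z : Y) (a : Y -> R) : R :=
  \big[Num.min/pc_loss P (xs0 z) a]_(x | P x z == Pmax P z) pc_loss P x a.

Definition support_ind (z y : Y) : R := ((y != z) && (qY P y != 0))%:R.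

(* [a y] is the part of row [y] merged into column [z] per unit of [Pc(Y|Z)]
   lost. *)
Definition merge_simplex (z : Y) : set (Y -> R) :=
  [set a | forall y, `[0, support_ind z y / qY P y]%classic (a y)] `&`
  [set a | \sum_y qY P y * a y = 1].

Lemma support_ind_ge0 z y : 0 <= support_ind z y.
Proof. exact: ler0n. Qed.

Lemma pc_loss_support z x a : P x z = Pmax P z ->
  pc_loss P x a = pc_loss P x (fun y => support_ind z y * a y).
Proof.
move=> x_max; apply: eq_bigr => y _; rewrite /support_ind.
have [->|yNz] := eqVneq y z; first by rewrite x_max subrr !mul0r.
have [q0|_] := eqVneq (qY P y) 0; last by rewrite mul1r.
by rewrite (qY_eq0_Pmax HP q0) (qY_eq0_joint HP x q0) subrr !mul0r.
Qed.

Lemma min_loss_le z a x : P x z = Pmax P z -> min_loss z a <= pc_loss P x a.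
Proof. by move=> x_max; apply: bigmin_le_cond; apply/eqP. Qed.

Lemma exists_min_loss z a :
  exists2 x, P x z = Pmax P z & pc_loss P x a <= min_loss z a.
Proof.
have := lexx (min_loss z a); rewrite {2}/min_loss => /bigmin_leP[|[x /eqP]];
  by [exists (xs0 z)|exists x].
Qed.

Lemma continuous_min_loss z : continuous (min_loss z).
Proof. by apply: continuous_bigmin => *; exact: continuous_linear_form. Qed.

Lemma merge_simplex_compact z : compact (merge_simplex z).
Proof. exact: compact_box_hyperplane. Qed.

Definition support_mass (z : Y) (w : Y -> R) : R :=
  \sum_y support_ind z y * (qY P y * w y).

Definition support_normalize (z : Y) (w : Y -> R) : Y -> R :=
  fun y => support_ind z y * w y / support_mass z w.

Lemma support_normalize_simplex z w : (forall y, 0 <= w y) ->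
  0 < support_mass z w -> merge_simplex z (support_normalize z w).
Proof.
move=> w_ge0 mass_gt0; split=> [y|] /=.
  rewrite in_itv /= /support_normalize.
  rewrite divr_ge0 ?mulr_ge0 ?support_ind_ge0 ?(ltW mass_gt0) //=.
  rewrite /support_ind; case: andP => [[yNz qNZ]|_]; last first.
    by rewrite mulr0n !mul0r.
  have q_gt0 := qY_neq0_gt0 HP qNZ.
  rewrite mulr1n !mul1r ler_pdivrMr // mulrC ler_pdivlMr // mulrC.
  rewrite /support_mass (bigD1 y) //= /support_ind yNz qNZ mul1r lerDl.
  by apply: sumr_ge0 => i _; rewrite !mulr_ge0 ?support_ind_ge0 ?qY_ge0.
rewrite /support_normalize -[RHS](divff (lt0r_neq0 mass_gt0)) mulr_suml.
by apply: eq_bigr => y _; rewrite !mulrA [qY P y * _]mulrC.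
Qed.

Lemma support_massE z w :
  \sum_(y | y != z) qY P y * w y = support_mass z w.
Proof.
rewrite /support_mass [RHS](bigD1 z) //= /support_ind eqxx mul0r add0r.
apply: eq_bigr => y yNz; rewrite yNz /=.
by have [->|_] := eqVneq (qY P y) 0; rewrite ?mul0r ?mul1r.
Qed.

Lemma support_mass_eq0 z w : (forall y, 0 <= w y) -> support_mass z w = 0 ->
  forall y, support_ind z y * w y = 0.
Proof.
move=> w_ge0 /eqP; rewrite psumr_eq0 => [/allP mass0 y|y _]; last first.
  by rewrite !mulr_ge0 ?support_ind_ge0 ?qY_ge0.
move/implyP/(_ isT)/eqP: (mass0 y (mem_index_enum y)); rewrite /support_ind.
case: andP => [[_ qNZ]|_]; last by rewrite !mul0r.
by rewrite !mul1r => /eqP; rewrite mulf_eq0 (negbTE qNZ) => /eqP ->.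
Qed.

Lemma pc_loss_support_normalize z x w : P x z = Pmax P z ->
  support_mass z w != 0 ->
  pc_loss P x w = support_mass z w * pc_loss P x (support_normalize z w).
Proof.
move=> x_max massNZ; rewrite (pc_loss_support _ x_max) mulr_sumr.
by apply: eq_bigr => y _; rewrite /support_normalize; field.
Qed.

Lemma support_mass_gt0 z : PcX P < PcXgY P -> 0 < qY P z ->
  0 < support_mass z (fun=> 1).
Proof.
move=> PcX_lt q_gt0; rewrite /support_mass lt_def.
rewrite sumr_ge0 ?andbT => [|y _]; last first.
  by rewrite !mulr_ge0 ?support_ind_ge0 ?qY_ge0.
apply/eqP => mass0.
have qY0 y : y != z -> qY P y = 0.
  move=> yNz; apply/eqP/negPn/negP => qNZ.
  move/eqP: mass0; rewrite (bigD1 y) //= /support_ind yNz qNZ mul1r mulr1.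
  rewrite paddr_eq0 ?qY_ge0 ?(negbTE qNZ) //.
  by apply: sumr_ge0 => i _; rewrite !mulr_ge0 ?support_ind_ge0 ?qY_ge0.
suff : PcXgY P <= \sum_y P (xs0 z) y.
  by rewrite leNgt (le_lt_trans (sum_joint_le_PcX P _)).
rewrite /PcXgY (bigD1 z) //= [X in _ <= X](bigD1 z) //= -/(Pmax P z) -xs0_max lerD2l.
rewrite big1 => [|y yNz]; last exact/qY_eq0_Pmax/qY0.
by apply: sumr_ge0 => y _; exact: joint_ge0.
Qed.

Lemma merge_simplex_pos z : PcX P < PcXgY P -> 0 < qY P z ->
  exists2 a, merge_simplex z a & 0 < min_loss z a.
Proof.
move=> PcX_lt q_gt0; have mass_gt0 := support_mass_gt0 PcX_lt q_gt0.
exists (support_normalize z (fun=> 1)); first exact: support_normalize_simplex.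
have loss_gt0 x : P x z = Pmax P z -> 0 < pc_loss P x (support_normalize z (fun=> 1)).
  move=> x_max; rewrite -(pmulr_rgt0 _ mass_gt0).
  rewrite -pc_loss_support_normalize ?lt0r_neq0 // /pc_loss.
  under eq_bigr do rewrite mulr1.
  by rewrite sumrB subr_gt0 (le_lt_trans (sum_joint_le_PcX P x)).
by apply: lt_bigmin => [|x /eqP]; [exact: loss_gt0|exact: loss_gt0].
Qed.

Lemma exists_max_min_loss : PcX P < PcXgY P ->
  exists zs a, [/\ 0 < qY P zs, merge_simplex zs a, 0 < min_loss zs a &
    forall z a', 0 < qY P z -> merge_simplex z a' -> min_loss z a' <= min_loss zs a].
Proof.
move=> PcX_lt.
have best_a z : exists a, 0 < qY P z ->
    merge_simplex z a /\
    forall a', merge_simplex z a' -> min_loss z a' <= min_loss z a.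
  have [q_gt0|_] := ltP 0 (qY P z); last by exists (fun=> 0).
  have [a0 a0_in _] := merge_simplex_pos PcX_lt q_gt0.
  have [a a_in a_max] := compact_EVT_max (ex_intro _ a0 a0_in)
    (@merge_simplex_compact z) (continuous_subspaceT (@continuous_min_loss z)).
  exists a => _; rewrite inE in a_in; split=> // a' a'_in.
  by apply: a_max; rewrite inE.
have [f f_max] := choice best_a; have [z1 q_z1] := exists_qY_gt0 HP.
have [zs q_zs zs_max] : extremum_spec >=%O (fun z => 0 < qY P z)
    (fun z => min_loss z (f z)) [arg max_(z > z1 | 0 < qY P z) min_loss z (f z)]%O.
  exact: arg_maxP.
have [a_in a_max] := f_max zs q_zs.
exists zs, (f zs); split => // [|z a' q_z a'_in].
  have [a0 a0_in a0_pos] := merge_simplex_pos PcX_lt q_zs.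
  exact: lt_le_trans a0_pos (a_max _ a0_in).
exact: le_trans ((f_max z q_z).2 a' a'_in) (zs_max z q_z).
Qed.

Lemma hlow_affine_ub_max (M : R) : 0 < M ->
  (forall z a, 0 < qY P z -> merge_simplex z a -> min_loss z a <= M) ->
  hlow_affine_ub P M^-1.
Proof.
move=> M_gt0 M_max.
apply: (hlow_affine_ub_by_columns HP); first by rewrite invr_ge0 ltW.
move=> ys w w_ge0 ys_max; rewrite (bigD1 ys) //= addrC addrK support_massE.
have mass_ge0 : 0 <= support_mass ys w.
  by apply: sumr_ge0 => y _; rewrite !mulr_ge0 ?support_ind_ge0 ?qY_ge0.
have [mass0|massNZ] := eqVneq (support_mass ys w) 0.
  exists (xs0 ys); rewrite mass0 (pc_loss_support w (xs0_max ys)) /pc_loss.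
  by rewrite big1 ?mulr0 // => y _; rewrite (support_mass_eq0 w_ge0 mass0) mulr0.
have mass_gt0 : 0 < support_mass ys w by rewrite lt_def massNZ.
have q_ys : 0 < qY P ys.
  rewrite ltNge; apply: contraNN massNZ => q_le0; rewrite eq_le mass_ge0 andbT.
  apply: sumr_le0 => y _; rewrite mulr_ge0_le0 ?support_ind_ge0 //.
  by apply: le_trans (ys_max y) _; rewrite mulr_le0_ge0.
have [x x_max x_loss] := exists_min_loss ys (support_normalize ys w).
exists x; rewrite (pc_loss_support_normalize x_max massNZ).
rewrite mulrCA ler_piMr // ler_pdivrMl // mulr1.
apply: le_trans x_loss (M_max _ _ q_ys _).
exact: support_normalize_simplex.
Qed.

Lemma merge_simplex_column_le zs a (M t : R) x : merge_simplex zs a -> 0 <= t ->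
  t * (1 + M) <= column_gap P zs -> (P x zs = Pmax P zs -> M <= pc_loss P x a) ->
  P x zs + \sum_y t * a y * P x y <= Pmax P zs + \sum_y t * a y * Pmax P y - t * M.
Proof.
move=> [a_box a_sum] t_ge0 t_gap M_le.
have a_ge0 y : 0 <= a y by have := a_box y; rewrite /= in_itv => /andP[].
have sumtE (f : Y -> R) : \sum_y t * a y * f y = t * \sum_y a y * f y.
  by rewrite mulr_sumr; apply: eq_bigr => y _; rewrite mulrA.
have lossE : pc_loss P x a = \sum_y a y * Pmax P y - \sum_y a y * P x y.
  by rewrite -sumrB; apply: eq_bigr => y _; rewrite mulrC mulrBr.
have aP_le1 : \sum_y a y * P x y <= 1.
  by rewrite -a_sum; apply: ler_sum => y _; rewrite mulrC ler_wpM2r ?joint_le_qY.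
have aPmax_ge0 : 0 <= \sum_y a y * Pmax P y.
  by apply: sumr_ge0 => y _; rewrite mulr_ge0 ?Pmax_ge0.
rewrite !sumtE; have [x_max|x_lt] := eqVneq (P x zs) (Pmax P zs).
  by have := M_le x_max; rewrite lossE x_max; nra.
have x_lt' : P x zs < Pmax P zs by rewrite lt_neqAle x_lt joint_le_Pmax.
by have := column_gap_le x_lt'; nra.
Qed.

Lemma merge_tradeoff zs a (M : R) : merge_simplex zs a -> 0 < M ->
  (forall x, P x zs = Pmax P zs -> M <= pc_loss P x a) ->
  exists2 t0, 0 < t0 &
    hlow_affine_lb P M^-1 t0 (fun d => merge_channel zs (fun y => d / M * a y)).
Proof.
move=> a_in M_gt0 M_le; have [a_box a_sum] := a_in.
have a_ge0 y : 0 <= a y by have := a_box y; rewrite /= in_itv => /andP[].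
have a_zs : a zs = 0.
  have := a_box zs; rewrite /= in_itv /support_ind eqxx mul0r.
  by move=> /andP[? ?]; apply/le_anti/andP.
pose A := \sum_y a y.
have a_le_A y : a y <= A by rewrite /A (bigD1 y) //= lerDl sumr_ge0.
have A1_gt0 : 0 < 1 + A by rewrite ltr_wpDr ?sumr_ge0.
have M1_gt0 : 0 < 1 + M by rewrite addr_gt0.
(* Small enough that no decision for [X] changes and every [t * a y <= 1]. *)
exists (M * Num.min (column_gap P zs / (1 + M)) (1 / (1 + A))).
  by rewrite mulr_gt0 // lt_min !divr_gt0 ?column_gap_gt0.
move=> d /andP[d_ge0 d_le]; set t := d / M.
have t_ge0 : 0 <= t by rewrite divr_ge0 // ltW.
have t_le : t <= Num.min (column_gap P zs / (1 + M)) (1 / (1 + A)).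
  by rewrite /t ler_pdivrMr // mulrC.
have t_gap : t * (1 + M) <= column_gap P zs.
  by rewrite -ler_pdivlMr //; apply: le_trans t_le _; rewrite ge_min lexx.
have t_A : t * (1 + A) <= 1.
  by rewrite -ler_pdivlMr //; apply: le_trans t_le _; rewrite ge_min lexx orbT.
have v01 y : 0 <= t * a y <= 1.
  by rewrite mulr_ge0 //=; have := a_le_A y; have := a_ge0 y; nra.
have v_zs : t * a zs = 0 by rewrite a_zs mulr0.
have dE : d = t * M by rewrite /t divfK ?gt_eqF.
split; first exact: merge_channel_is_channel.
  apply: (PcXgZ_merge_le HP v01 v_zs) => x; rewrite dE.
  exact: merge_simplex_column_le a_in t_ge0 t_gap (M_le x).
apply: le_trans (PcYgZ_merge_ge HP v_zs).
under eq_bigr do rewrite mulrCA; rewrite -mulr_sumr a_sum mulr1.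
by rewrite /t mulrC.
Qed.

Lemma exists_hlow_affine : PcX P < PcXgY P -> exists k t0 W,
  [/\ 0 <= k, 0 < t0, t0 < PcXgY P - PcX P, hlow_affine_ub P k &
      hlow_affine_lb P k t0 W].
Proof.
move=> PcX_lt; have [zs [a [q_zs a_in M_gt0 M_max]]] := exists_max_min_loss PcX_lt.
have [t0 t0_gt0 lb] := merge_tradeoff a_in M_gt0 (fun x => @min_loss_le zs a x).
pose t1 := Num.min t0 ((PcXgY P - PcX P) / 2).
exists (min_loss zs a)^-1, t1,
  (fun d => merge_channel zs (fun y => d / min_loss zs a * a y)).
have gap_gt0 : 0 < PcXgY P - PcX P by rewrite subr_gt0.
split.
- by rewrite invr_ge0 ltW.
- by rewrite lt_min t0_gt0 divr_gt0.
- by rewrite gt_min ltr_pdivrMr // ltr_pMr // ltr1n orbT.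
- exact: hlow_affine_ub_max M_gt0 M_max.
- move=> d /andP[d_ge0 d_le]; apply: lb.
  by rewrite d_ge0 (le_trans d_le) // ge_min lexx.
Qed.

End MergeWeights.

Section UniqueArgmax.
Variables (R : realType) (X Y : finType) (P : X -> Y -> R) (xs : Y -> X).
Hypothesis HP : is_joint P.
Hypothesis PcX_lt : PcX P < PcXgY P.
Hypothesis qY_gt0 : forall y, 0 < qY P y.
Hypothesis xs_argmax : forall y x, x != xs y -> condXY P x y < condXY P (xs y) y.

Lemma joint_lt_argmax y x : x != xs y -> P x y < P (xs y) y.
Proof. by move/xs_argmax; rewrite /condXY ltr_pM2r // invr_gt0. Qed.

Lemma argmax_Pmax y : P (xs y) y = Pmax P y.
Proof.
apply/le_anti; rewrite joint_le_Pmax /=; apply: bigmax_le => [|x _].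
  exact: joint_ge0.
by have [->//|/joint_lt_argmax/ltW] := eqVneq x (xs y).
Qed.

Lemma argmax_unique x y : P x y = Pmax P y -> x = xs y.
Proof.
move=> x_max; apply/eqP/negPn/negP => /joint_lt_argmax.
by rewrite x_max -argmax_Pmax ltxx.
Qed.

Definition argmax_gap (y z : Y) : R := P (xs y) y - P (xs z) y.

Lemma argmax_gap_ge0 y z : 0 <= argmax_gap y z.
Proof. by rewrite subr_ge0 argmax_Pmax joint_le_Pmax. Qed.

Lemma pc_ratioE y z : pc_ratio P xs (y, z) =
  if argmax_gap y z == 0 then +oo%E else (qY P y / argmax_gap y z)%:E.
Proof. by []. Qed.

Lemma min_pc_ratio_le p : (min_pc_ratio P xs <= pc_ratio P xs p)%E.
Proof. exact: bigmin_le. Qed.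

Lemma exists_min_pc_ratio : exists p, pc_ratio P xs p = min_pc_ratio P xs.
Proof.
case: (inhabitedY HP) => y.
have [p _ minE] := @eq_bigmin _ _ _ +oo%E (y, y) predT (pc_ratio P xs) isT
  (fun _ _ => leey _).
by exists p; exact/esym.
Qed.

Lemma exists_argmax_gap_neq0 : exists y z, argmax_gap y z != 0.
Proof.
apply/not_existsP => gap0; case: (inhabitedY HP) => z.
suff : PcXgY P <= PcX P by rewrite leNgt PcX_lt.
apply: le_trans (sum_joint_le_PcX P (xs z)); rewrite le_eqVlt; apply/orP; left.
apply/eqP/eq_bigr => y _; rewrite -/(Pmax P y) -argmax_Pmax; apply/eqP.
by rewrite -subr_eq0; apply/negPn/negP => gap; apply: (gap0 y); exists z.
Qed.

Section MinimizingPair.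
Variables y0 z0 : Y.
Hypothesis y0z0_min : pc_ratio P xs (y0, z0) = min_pc_ratio P xs.

Let M := argmax_gap y0 z0 / qY P y0.

Lemma min_pair_gap_gt0 : 0 < argmax_gap y0 z0.
Proof.
have [y [z gap]] := exists_argmax_gap_neq0.
have : (pc_ratio P xs (y0, z0) < +oo)%E.
  rewrite y0z0_min (le_lt_trans (min_pc_ratio_le (y, z))) //.
  by rewrite pc_ratioE (negbTE gap) ltry.
rewrite pc_ratioE; case: eqP => [_|gap0 _]; first by rewrite ltxx.
by rewrite lt_def argmax_gap_ge0 andbT; apply/eqP.
Qed.

Lemma min_pair_neq : y0 != z0.
Proof.
by apply: contraTneq min_pair_gap_gt0 => ->; rewrite /argmax_gap subrr ltxx.
Qed.

Lemma min_pair_ratio_gt0 : 0 < M.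
Proof. by rewrite divr_gt0 ?min_pair_gap_gt0. Qed.

Lemma min_pc_ratioE : min_pc_ratio P xs = (M^-1)%:E.
Proof. by rewrite -y0z0_min pc_ratioE gt_eqF ?min_pair_gap_gt0 // invf_div. Qed.

Lemma argmax_gap_le y z : argmax_gap y z <= M * qY P y.
Proof.
have [->|gap] := eqVneq (argmax_gap y z) 0.
  by rewrite mulr_ge0 ?qY_ge0 ?ltW ?min_pair_ratio_gt0.
have := min_pc_ratio_le (y, z); rewrite min_pc_ratioE pc_ratioE (negbTE gap) lee_fin.
rewrite ler_pdivlMr ?lt_def ?gap ?argmax_gap_ge0 // => le_q.
by rewrite -ler_pdivrMl ?invr_gt0 ?min_pair_ratio_gt0 // invrK -mulrA mulrC.
Qed.

Lemma min_loss_le_min_pair z a : merge_simplex P z a -> min_loss P xs z a <= M.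
Proof.
move=> [a_box a_sum]; apply: le_trans (min_loss_le xs a (argmax_Pmax z)) _.
rewrite -[M]mulr1 -a_sum mulr_sumr; apply: ler_sum => y _.
have /andP[a_ge0 _] : 0 <= a y <= _ := a_box y.
by rewrite mulrA ler_wpM2r // -argmax_Pmax; exact: argmax_gap_le.
Qed.

Let vertex y : R := (y == y0)%:R / qY P y0.

Lemma vertex_simplex : merge_simplex P z0 vertex.
Proof.
split=> [y|] /=.
  rewrite in_itv /= /vertex divr_ge0 ?ler0n ?qY_ge0 //=.
  have [->|_] := eqVneq y y0; last first.
    by rewrite mulr0n mul0r divr_ge0 ?support_ind_ge0 ?qY_ge0.
  by rewrite /support_ind min_pair_neq gt_eqF.
under eq_bigr do rewrite mulrCA mulrC.
by rewrite sum_mul_indicator divff ?gt_eqF.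
Qed.

Lemma pc_loss_vertex x : pc_loss P x vertex = (Pmax P y0 - P x y0) / qY P y0.
Proof.
rewrite /pc_loss /vertex; under eq_bigr do rewrite mulrA.
by rewrite -mulr_suml sum_mul_indicator.
Qed.

Lemma zchannel_merge (g : R) :
  zchannel y0 z0 g = merge_channel z0 (fun y => (y == y0)%:R * g).
Proof.
apply/funext => y; apply/funext => z; rewrite /zchannel /merge_channel.
have [->|yNy0] := eqVneq y y0; last first.
  by rewrite mul0r subr0 mulr1 mulr0 addr0 eq_sym; case: (y == z).
rewrite mul1r; have [->|zNz0] := eqVneq z z0.
  by rewrite (negbTE min_pair_neq) mul0r add0r mul1r.
by rewrite mul0r addr0 [z == y0]eq_sym; case: (y0 == z); rewrite ?mul1r ?mul0r.
Qed.

Lemma min_pair_affine : exists k t0, [/\ min_pc_ratio P xs = k%:E, 0 <= k, 0 < t0,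
  hlow_affine_ub P k &
  hlow_affine_lb P k t0 (fun d => zchannel y0 z0 (d / argmax_gap y0 z0))].
Proof.
have M_gt0 := min_pair_ratio_gt0.
have vertex_loss x : P x z0 = Pmax P z0 -> M <= pc_loss P x vertex.
  by move/argmax_unique => ->; rewrite pc_loss_vertex -argmax_Pmax.
have [t0 t0_gt0 lb] := merge_tradeoff HP vertex_simplex M_gt0 vertex_loss.
exists M^-1, t0; split=> //.
- exact: min_pc_ratioE.
- by rewrite invr_ge0 ltW.
- apply: (hlow_affine_ub_max HP argmax_Pmax M_gt0) => z a _.
  exact: min_loss_le_min_pair.
have zfamE : (fun d => zchannel y0 z0 (d / argmax_gap y0 z0)) =
    (fun d => merge_channel z0 (fun y => d / M * vertex y)).
  apply/funext => d; rewrite zchannel_merge; congr merge_channel; apply/funext => y.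
  by rewrite /vertex /M; field; rewrite !gt_eqF ?min_pair_gap_gt0.
by rewrite zfamE.
Qed.

End MinimizingPair.
End UniqueArgmax.

Theorem theorem3 (R : realType) (X Y : finType) (P : X -> Y -> R) :
  is_joint P ->
  PcX P < PcXgY P ->
  (* linear part, with the left derivative at Pc(X|Y) *)
  (exists epsL : R,
     PcX P < epsL < PcXgY P /\
     cvg (left_dq (hlow P) (PcXgY P) @ (PcXgY P)^'-) /\
     forall eps : R, epsL <= eps <= PcXgY P ->
       hlow P eps = 1 - (PcXgY P - eps) * left_deriv (hlow P) (PcXgY P))
  /\
  (* value of the left derivative, and optimality of the Z-channel *)
  (forall xs : Y -> X,
     (forall y, 0 < qY P y) ->
     (forall y x, x != xs y -> condXY P x y < condXY P (xs y) y) ->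
     ((left_deriv (hlow P) (PcXgY P))%:E = min_pc_ratio P xs)%E /\
     (forall y0 z0 : Y,
        pc_ratio P xs (y0, z0) = min_pc_ratio P xs ->
        exists epsLyz : R, epsLyz < PcXgY P /\
          forall eps : R, epsLyz <= eps <= PcXgY P ->
            achieves P (zchannel y0 z0 (zeta_yz P xs y0 z0 eps)) eps)).
Proof.
move=> HP PcX_lt; split.
  have [xs0 xs0_max] := exists_column_argmax HP.
  have [k [t0 [W [k0 t0_gt0 t0_lt ub lb]]]] := exists_hlow_affine HP xs0_max PcX_lt.
  have [dq_cvg dq_lim] := hlow_left_deriv k0 t0_gt0 ub lb.
  exists (PcXgY P - t0); split; first by apply/andP; split; lra.
  split=> // eps e_in; rewrite dq_lim mulrC; exact: hlow_affine k0 ub lb e_in.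
move=> xs qY_gt0 xs_argmax.
have pair_affine := min_pair_affine HP PcX_lt qY_gt0 xs_argmax.
have [[y0 z0] /pair_affine[k [t0 [kE k0 t0_gt0 ub lb]]]] := exists_min_pc_ratio xs HP.
split; first by have [_ ->] := hlow_left_deriv k0 t0_gt0 ub lb; rewrite kE.
move=> y1 z1 /pair_affine[k1 [t1 [_ k1_ge0 t1_gt0 ub1 lb1]]].
exists (PcXgY P - t1); split=> [|eps e_in]; first by rewrite ltrBlDr ltrDl.
exact: achieves_affine_lb k1_ge0 ub1 lb1 e_in.
Qed.
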